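(* Let $n\ge 1$ and $A$ be as in the context. A position $P$ of $\mathrm{AGG}(n,A)$ is reachable if and only if the sequence $v_1\le v_2\le\dots\le v_n$ of its cell values, sorted in nondecreasing order with each empty cell counted as value $0$ (so $v_i=0$ exactly when $P$ has at least $i$ empty cells), satisfies $v_i\le \mathrm{Single}(i,A)$ for every $i=1,\dots,n$.
   Context: Let $A$ be a set of positive integers with $1\in A$ (the allowed tile values). For an integer $n\ge 0$, the abstract generalized 2048 game $\mathrm{AGG}(n,A)$ is played on $n$ indistinguishable cells. A position assigns to each cell either nothing (the cell is empty) or a tile carrying a value in $A$. The initial position has all cells empty. A step, which can be performed from any position having at least one empty cell, consists of: (i) placing a new tile of value $1$ into a chosen empty cell; then (ii) optionally choosing any collection of pairwise disjoint sets of nonempty cells such that the sum of the tile values in each chosen set belongs to $A$, and merging each chosen set into a single tile, whose value is that sum, placed in one cell of the set, the other cells of the set becoming empty. The game ends when, after a step, all cells are nonempty (no further step is then possible). A position is reachable if it can be obtained from the initial position by a finite sequence of steps. For $n\ge1$, $\mathrm{Single}(n,A)$ denotes the supremum (possibly $\infty$) of the values $x\in A$ such that the position of $\mathrm{AGG}(n,A)$ with one tile of value $x$ and $n-1$ empty cells is reachable. *)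

From mathcomp Require Import all_boot.
Set Implicit Arguments. Unset Strict Implicit. Unset Printing Implicit Defensive.

(* A position of AGG(n,A): a function from the n cells ('I_n) to nat;
   value 0 = empty cell, value v > 0 = tile of value v. *)

(* The merge is encoded by g : cells -> cells sending each cell to the cell
   where its tile ends up; the merged sets are the fibres of fixed points of g
   (of size >= 2), consisting of nonempty cells only. *)
Definition step (n : nat) (A : nat -> Prop) (p q : 'I_n -> nat) : Prop :=
  exists c : 'I_n, p c = 0 /\
  let p' := fun i : 'I_n => if i == c then 1 else p i in
  exists g : 'I_n -> 'I_n,
    (forall i, g (g i) = g i) /\
    (forall i, p' i = 0 -> g i = i) /\
    (forall i, 0 < p' i -> 0 < p' (g i)) /\
    (forall j, g j = j -> 1 < #|[pred i | g i == j]| ->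
               A (\sum_(i | g i == j) p' i)) /\
    (forall j, q j = if g j == j then \sum_(i | g i == j) p' i else 0).

Inductive reachable (n : nat) (A : nat -> Prop) : ('I_n -> nat) -> Prop :=
| reach_init (p : 'I_n -> nat) : (forall i, p i = 0) -> reachable A p
| reach_step (p q : 'I_n -> nat) : reachable A p -> step A p q -> reachable A q.

(* x belongs to the set whose supremum is Single(n,A). *)
Definition single_val (n : nat) (A : nat -> Prop) (x : nat) : Prop :=
  A x /\ exists p : 'I_n -> nat, reachable A p /\
    exists c : 'I_n, p c = x /\ forall j, j != c -> p j = 0.

(* v <= Single(n,A) (supremum in nat ∪ {∞}): v is below every upper bound. *)
Definition le_Single (v n : nat) (A : nat -> Prop) : Prop :=
  forall b, (forall x, single_val n A x -> x <= b) -> v <= b.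

Definition sorted_values (n : nat) (p : 'I_n -> nat) : seq nat :=
  sort leq [seq p i | i <- enum 'I_n].

(* Sufficiency: build the tiles from the largest down. Once the larger tiles are
   in place, the next tile, of value v, is obtained by playing a one-tile game of
   AGG(k, A) inside the empty cells, where k - 1 is the number of cells of value
   smaller than v; this needs only that plays of AGG(k, A) can be simulated on any
   k empty cells of a larger board, and that v is a Single(k, A) value.
   Necessity: along a play, give every tile a label s, distinct for distinct
   tiles, such that its value is a Single(s + 1, A) value. A new tile 1 takes a
   label unused so far; a merged tile takes the largest label of its parts, since
   those parts can be laid out at their labels in a game of that size, reached,
   and merged. As the labels lie below n, the pigeonhole principle gives each
   tile a label at most the number of cells of smaller value, and sorting the
   values turns this into v_i <= Single(i, A). *)

From mathcomp Require Import all_boot perm zify.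
From Stdlib Require Import Classical.
Set Implicit Arguments. Unset Strict Implicit. Unset Printing Implicit Defensive.

Definition upd T n (p : 'I_n -> T) (c : 'I_n) (x : T) : 'I_n -> T :=
  fun i => if i == c then x else p i.

Definition single_tile n (c : 'I_n) (x : nat) : 'I_n -> nat := upd (fun=> 0) c x.

Lemma sum_upd n (p : 'I_n -> nat) c x :
  p c = 0 -> \sum_i upd p c x i = x + \sum_i p i.
Proof.
move=> pc0; rewrite (bigD1 c) // [in RHS](bigD1 c) //= /upd eqxx pc0 add0n.
by congr (_ + _); apply: eq_bigr => i /negbTE ->.
Qed.

Lemma sum_single_tile n (c : 'I_n) x : \sum_i single_tile c x i = x.
Proof. by rewrite sum_upd // big1 ?addn0. Qed.

Section Game.
Variable A : nat -> Prop.

Lemma reachable_eq n (p q : 'I_n -> nat) : reachable A p -> p =1 q -> reachable A q.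
Proof.
case=> [p0 p00|p0 p1 rp0 [c [pc0 [g [gK [g0 [gpos [gA p1E]]]]]]]] eq_q.
  by apply: reach_init => i; rewrite -eq_q.
apply: (reach_step rp0); exists c; split=> //; exists g; do 4 (split=> //).
by move=> j; rewrite -eq_q p1E.
Qed.

Lemma step_sum n (p q : 'I_n -> nat) : step A p q -> \sum_i q i = (\sum_i p i).+1.
Proof.
case=> c [pc0 [g [gK [_ [_ [_ qE]]]]]].
rewrite -add1n -(sum_upd 1 pc0).
rewrite [RHS](partition_big g (fun j => g j == j)) /=; last by move=> i _; rewrite gK.
rewrite [LHS](bigID (fun j => g j == j)) /= [X in _ + X]big1 ?addn0.
  by apply: eq_bigr => j gj; rewrite qE gj.
by move=> j /negbTE gj; rewrite qE gj.
Qed.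

Lemma reachable_below n (X : 'I_n -> nat) t : reachable A X -> t < \sum_i X i ->
  exists2 p : 'I_n -> nat, reachable A p & (exists c, p c = 0) /\ \sum_i p i = t.
Proof.
elim=> [p p0|p q rp IH st]; first by rewrite big1.
rewrite (step_sum st) ltnS leq_eqVlt => /predU1P [->|/IH //].
by exists p => //; split=> //; case: st => c [pc0 _]; exists c.
Qed.

Lemma reachable_merge_all n (p : 'I_n -> nat) c : reachable A p -> p c = 0 ->
  A (\sum_i p i).+1 -> reachable A (single_tile c (\sum_i p i).+1).
Proof.
move=> rp pc0 Asum; apply: (reach_step rp); exists c; split=> //.
set p' := fun i => _; pose g i := if p' i == 0 then i else c.
have gc : g c = c by rewrite /g /p' eqxx.
have fibre_c : \sum_(i | g i == c) p' i = (\sum_i p i).+1.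
  rewrite -add1n -(sum_upd 1 pc0) [RHS](bigID (fun i => g i == c)) /=.
  rewrite [X in _ + X]big1 ?addn0 // => i; rewrite /g.
  by case: (p' i =P 0) => [p'0 _ //|_]; rewrite eqxx.
have fibre_other j i : j != c -> g i == j -> p' i = 0 /\ i = j.
  rewrite /g; case: (p' i =P 0) => [p'0 _ /eqP //|_ /negbTE jc /eqP cj].
  by rewrite cj eqxx in jc.
exists g; split.
  by move=> i; rewrite [g i]/g; case: ifP => [/eqP p'0|_]; rewrite ?gc // /g p'0.
split; first by move=> i p'0; rewrite /g p'0.
split; first by move=> i; rewrite /g; case: eqP => [-> //|_ _]; rewrite /p' eqxx.
split.
  move=> j _; have [->|jc] := eqVneq j c; first by rewrite fibre_c.
  rewrite ltnNge => /negP[]; apply/card_le1_eqP => x y; rewrite !inE.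
  by move=> /(fibre_other _ _ jc) [_ ->] /(fibre_other _ _ jc) [_ ->].
move=> j; rewrite /single_tile /upd; have [->|jc] := eqVneq j c.
  by rewrite gc eqxx fibre_c.
by case: eqP => // _; rewrite big1 // => i /(fibre_other _ _ jc) [].
Qed.

Lemma reachable_single_val n (c : 'I_n) x :
  A x -> reachable A (single_tile c x) -> single_val n A x.
Proof.
move=> Ax rx; split=> //; exists (single_tile c x); split=> //; exists c.
by rewrite /single_tile /upd eqxx; split=> // j /negbTE ->.
Qed.

Lemma single_val_reachable n x :
  single_val n A x -> exists c : 'I_n, reachable A (single_tile c x).
Proof.
case=> _ [p [rp [c [pc p0]]]]; exists c; apply: reachable_eq rp _ => j.
by rewrite /single_tile /upd; case: eqP => [->|/eqP /p0].
Qed.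

Lemma single_val_le_sum n (X : 'I_n -> nat) x : reachable A X -> A x -> 0 < x ->
  x <= \sum_i X i -> single_val n A x.
Proof.
move=> rX Ax x_gt0 le_x.
have [|p rp [[c pc0] sum_p]] := reachable_below (t := x.-1) rX; first by rewrite prednK.
apply: (reachable_single_val (c := c) Ax).
by have := reachable_merge_all rp pc0; rewrite sum_p prednK //; apply.
Qed.

Lemma single_val_downward n x y :
  single_val n A y -> A x -> 0 < x -> x <= y -> single_val n A x.
Proof.
move=> /single_val_reachable [c ry] Ax x_gt0 le_xy.
by apply: single_val_le_sum ry Ax x_gt0 _; rewrite sum_single_tile.
Qed.

Lemma single_val1 n : A 1 -> 0 < n -> single_val n A 1.
Proof.
move=> A1 n_gt0; pose c : 'I_n := Ordinal n_gt0.
have r0 : reachable A (fun _ : 'I_n => 0) by apply: reach_init.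
have := reachable_merge_all r0 (c := c) erefl; rewrite big1 // => /(_ A1).
exact: reachable_single_val A1.
Qed.

Lemma reachable_valueA n (p : 'I_n -> nat) : A 1 -> reachable A p ->
  forall d, p d != 0 -> A (p d).
Proof.
move=> A1; elim=> [p0 p00|p0 q _ IH [c [pc0 [g [_ [_ [_ [gA qE]]]]]]]] d.
  by rewrite p00 eqxx.
rewrite qE; case: (g d =P d) => [gd|_]; last by rewrite eqxx.
have [le_card|gt_card] := leqP #|[pred i | g i == d]| 1; last by move=> _; exact: gA.
have fibre_d i : (g i == d) = (i == d).
  apply/idP/eqP => [gi|->]; last by rewrite gd.
  by apply: (card_le1_eqP le_card); rewrite inE // gd.
by rewrite (big_pred1 d fibre_d) /=; case: (d =P c) => // _; exact: IH.
Qed.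

(** * Simulating a game on the empty cells of a larger one *)

Section Embedding.
Variables (m n : nat) (f : 'I_m -> 'I_n).
Hypothesis f_inj : injective f.

Definition extend T (b : 'I_n -> T) (u : 'I_m -> T) (d : 'I_n) : T :=
  if [pick i | f i == d] is Some i then u i else b d.

Lemma extend_in T (b : 'I_n -> T) u i : extend b u (f i) = u i.
Proof.
rewrite /extend; case: pickP => [i' /eqP /f_inj -> //|no_i].
by have := no_i i; rewrite eqxx.
Qed.

Lemma extend_out T (b : 'I_n -> T) u d : d \notin codom f -> extend b u d = b d.
Proof.
move=> d_out; rewrite /extend; case: pickP => [i /eqP fi|//].
by rewrite -fi codom_f in d_out.
Qed.

Lemma upd_extend T (b : 'I_n -> T) u c x :
  upd (extend b u) (f c) x =1 extend b (upd u c x).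
Proof.
move=> d; case/boolP: (d \in codom f) => [/codomP [i ->]|d_out].
  by rewrite /upd !extend_in (inj_eq f_inj).
by rewrite /upd !extend_out //; case: eqP => // dc; rewrite dc codom_f in d_out.
Qed.

Section Fibres.
Variable g : 'I_m -> 'I_m.

Lemma fibre_extend i :
  [set d | extend id (f \o g) d == f i] = f @: [set k | g k == i].
Proof.
apply/setP => d; rewrite inE; case/boolP: (d \in codom f) => [/codomP [k ->]|d_out].
  by rewrite extend_in (inj_eq f_inj) (mem_imset _ _ f_inj) inE.
rewrite extend_out //; apply/eqP/imsetP => [di|[k _ dk]].
  by rewrite di codom_f in d_out.
by rewrite dk codom_f in d_out.
Qed.

Lemma card_fibre_extend i :
  #|[pred d | extend id (f \o g) d == f i]| = #|[pred k | g k == i]|.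
Proof.
transitivity #|[set d | extend id (f \o g) d == f i]|.
  by apply: eq_card => d; rewrite inE.
by rewrite fibre_extend card_imset //; apply: eq_card => k; rewrite inE.
Qed.

Lemma sum_fibre_extend i (F : 'I_n -> nat) :
  \sum_(d | extend id (f \o g) d == f i) F d = \sum_(k | g k == i) F (f k).
Proof.
rewrite (eq_bigl (mem [set d | extend id (f \o g) d == f i])) => [|d]; last by rewrite /= inE.
rewrite fibre_extend big_imset /=; last exact: in2W f_inj.
by apply: eq_bigl => k; rewrite inE.
Qed.

Lemma fibre_extend_out j d :
  j \notin codom f -> (extend id (f \o g) d == j) = (d == j).
Proof.
move=> j_out; case/boolP: (d \in codom f) => [/codomP [k ->]|d_out].
  rewrite extend_in /=; apply/idP/idP => /eqP fj; by rewrite -fj codom_f in j_out.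
by rewrite extend_out.
Qed.

End Fibres.

Lemma step_extend (b : 'I_n -> nat) (u0 u1 : 'I_m -> nat) :
  (forall i, b (f i) = 0) -> step A u0 u1 -> step A (extend b u0) (extend b u1).
Proof.
move=> b0 [c [u0c [g [gK [g0 [gpos [gA u1E]]]]]]].
exists (f c); split; first by rewrite extend_in.
set P' := fun d => _; have P'E d : P' d = extend b (upd u0 c 1) d := upd_extend b u0 c 1 d.
have sum_fibre i :
    \sum_(d | extend id (f \o g) d == f i) P' d = \sum_(k | g k == i) upd u0 c 1 k.
  by rewrite sum_fibre_extend; apply: eq_bigr => k _; rewrite P'E extend_in.
exists (extend id (f \o g)); split.
  move=> d; case/boolP: (d \in codom f) => [/codomP [i ->]|d_out].
    by rewrite !extend_in /= gK.
  by rewrite !extend_out.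
split.
  move=> d; rewrite P'E; case/boolP: (d \in codom f) => [/codomP [i ->]|d_out].
    by rewrite !extend_in /= => /g0 ->.
  by rewrite !extend_out.
split.
  move=> d; rewrite !P'E; case/boolP: (d \in codom f) => [/codomP [i ->]|d_out].
    by rewrite !extend_in /=; apply: gpos.
  by rewrite !extend_out.
split.
  move=> j; case/boolP: (j \in codom f) => [/codomP [i ->]|j_out].
    by rewrite extend_in card_fibre_extend sum_fibre => /f_inj; apply: gA.
  have -> // : #|[pred d | extend id (f \o g) d == j]| = 1.
  by rewrite -(card1 j); apply: eq_card => d; rewrite !inE fibre_extend_out.
move=> j; case/boolP: (j \in codom f) => [/codomP [i ->]|j_out].
  by rewrite !extend_in /= (inj_eq f_inj) u1E sum_fibre.
rewrite !extend_out // eqxx (big_pred1 j) => [|d]; last exact: fibre_extend_out.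
by rewrite P'E extend_out.
Qed.

Lemma reachable_extend (b : 'I_n -> nat) (u : 'I_m -> nat) :
  reachable A b -> (forall i, b (f i) = 0) -> reachable A u -> reachable A (extend b u).
Proof.
move=> rb b0; elim=> [u0 u00|u0 u1 _ IH st]; last exact: reach_step IH (step_extend b0 st).
apply: reachable_eq rb _ => d; case/boolP: (d \in codom f) => [/codomP [i ->]|d_out].
  by rewrite extend_in u00 b0.
by rewrite extend_out.
Qed.

End Embedding.

Lemma reachable_add_tile n (p : 'I_n -> nat) c k y :
  reachable A p -> p c = 0 -> k <= #|[pred d | p d == 0]| -> single_val k A y ->
  reachable A (upd p c y).
Proof.
move=> rp pc0 le_k /single_val_reachable [c' ry].
(* [f] sends the cells of AGG(k) to empty cells of [p], the lone tile's cell to [c]. *)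
have cZ : c \in [pred d | p d == 0] by rewrite inE pc0.
pose f i := enum_val (tperm (widen_ord le_k c') (enum_rank_in cZ c) (widen_ord le_k i)).
have f_inj : injective f.
  by move=> i j /enum_val_inj /perm_inj /(congr1 val) /= /val_inj.
have fc' : f c' = c by rewrite /f tpermL enum_rankK_in.
have pf0 i : p (f i) = 0 by apply/eqP; exact: (enum_valP (A := [pred d | p d == 0])).
apply: reachable_eq (reachable_extend f_inj rp pf0 ry) _ => d.
case/boolP: (d \in codom f) => [/codomP [i ->]|d_out].
  by rewrite (extend_in f_inj) /single_tile /upd -fc' (inj_eq f_inj) pf0.
by rewrite extend_out // /upd; case: (d =P c) => // dc; rewrite dc -fc' codom_f in d_out.
Qed.

Lemma single_val_widen m n x : single_val m A x -> m <= n -> single_val n A x.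
Proof.
move=> sx le_mn; have [Ax [_ [_ [c _]]]] := sx.
have r0 : reachable A (fun _ : 'I_n => 0) by apply: reach_init.
apply: (reachable_single_val (c := widen_ord le_mn c) Ax).
apply: reachable_add_tile r0 _ _ sx => //.
by rewrite (eq_card (B := 'I_n)) ?card_ord.
Qed.

Definition single_bounded n (p : 'I_n -> nat) :=
  forall d, p d != 0 -> single_val #|[pred e | p e < p d]|.+1 A (p d).

Lemma single_bounded_clear n (p : 'I_n -> nat) c :
  single_bounded p -> single_bounded (upd p c 0).
Proof.
move=> bp d; rewrite /upd; case: (d =P c) => [_|_ pd]; first by rewrite eqxx.
apply: single_val_widen (bp d pd) _; rewrite ltnS; apply: subset_leq_card.
by apply/subsetP => e; rewrite !inE; case: (e =P c) => // _; rewrite lt0n.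
Qed.

(* Clear the smallest tile, reach the remaining position, then play that tile in
   the empty cells, which are at least as many as the cells of smaller value. *)
Lemma single_bounded_reachable n (p : 'I_n -> nat) : single_bounded p -> reachable A p.
Proof.
move card_nz : #|[pred d | p d != 0]| => k; elim: k p card_nz => [|k IH] p card_nz bp.
  apply: reach_init => i; apply/eqP; move/card0_eq/(_ i): card_nz.
  by rewrite !inE => /negbFE.
have [c0 pc0] : exists c, p c != 0 by apply/card_gt0P; rewrite card_nz.
have [c pc min_c] := arg_minnP (P := fun d => p d != 0) p pc0; set y := p c in pc min_c.
have rp0 : reachable A (upd p c 0).
  apply: IH (single_bounded_clear (c := c) bp).
  move: card_nz; rewrite (cardD1 c) inE pc => -[<-].
  by apply: eq_card => d; rewrite !inE /upd; case: (d =P c).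
have le_k : #|[pred e | p e < y]|.+1 <= #|[pred d | upd p c 0 d == 0]|.
  apply: (@leq_trans #|[predU1 c & [pred e | p e < y]]|); first by rewrite cardU1 inE ltnn.
  apply/subset_leq_card/subsetP => e; rewrite !inE /upd.
  case: (e =P c) => //= _; apply: contraLR; rewrite -leqNgt; exact: min_c.
apply: reachable_eq (reachable_add_tile (c := c) rp0 _ le_k (bp c pc)) _.
  by rewrite /upd eqxx.
by move=> d; rewrite /upd; case: (d =P c) => [->|].
Qed.

(** * Labellings of reachable positions *)

Definition labelling n (p : 'I_n -> nat) (s : 'I_n -> 'I_n) :=
  (forall d, p d != 0 -> single_val (s d).+1 A (p d)) /\
  {in [pred d | p d != 0] &, injective s}.

Lemma exists_label_le (T : finType) n (S : {pred T}) (s : T -> 'I_n) l :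
  {in S &, injective s} -> n - l.+1 < #|S| -> exists2 e, e \in S & s e <= l.
Proof.
move=> s_inj; rewrite ltnNge => S_big; apply/exists_inP; apply: contraNT S_big.
move=> /exists_inPn above_l; pose labs := [seq nat_of_ord (s e) | e <- enum S].
have labs_uniq : uniq labs.
  rewrite map_inj_in_uniq ?enum_uniq // => x y; rewrite !mem_enum => xS yS.
  by move/ord_inj; apply: s_inj.
have labs_sub : {subset labs <= iota l.+1 (n - l.+1)}.
  move=> x /mapP [e]; rewrite mem_enum => /above_l; rewrite -ltnNge => lt_l ->.
  by rewrite mem_iota; have := ltn_ord (s e); lia.
by have := uniq_leq_size labs_uniq labs_sub; rewrite size_map size_iota -cardE.
Qed.

Lemma labelling_single_bounded n (p : 'I_n -> nat) s :
  labelling p s -> single_bounded p.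
Proof.
move=> [lab_single s_inj] d pd; set v := p d; set l := #|_|.
have [Av _] := lab_single d pd; have v_gt0 : 0 < v by rewrite lt0n.
have [e ve le_se] : exists2 e, e \in [pred e | v <= p e] & s e <= l.
  apply: exists_label_le => [x y|].
    by rewrite !inE => vx vy; apply: s_inj; rewrite inE -lt0n (leq_trans v_gt0).
  have := cardC [pred e | p e < v]; rewrite card_ord -/l.
  have -> : #|[pred e | v <= p e]| = #|[predC [pred e | p e < v]]|.
    by apply: eq_card => e; rewrite !inE leqNgt.
  have : 0 < #|[predC [pred e | p e < v]]| by apply/card_gt0P; exists d; rewrite !inE ltnn.
  move: #|[predC _]| => C; clearbody l; lia.
have pe : p e != 0 by rewrite -lt0n (leq_trans v_gt0).
apply: single_val_downward Av v_gt0 ve.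
by apply: single_val_widen (lab_single e pe) _; rewrite ltnS.
Qed.

Lemma fresh_label n (p : 'I_n -> nat) (s : 'I_n -> 'I_n) c : p c = 0 ->
  {in [pred d | p d != 0] &, injective s} -> exists k, forall d, p d != 0 -> s d != k.
Proof.
move=> pc0 s_inj.
have img_small : #|s @: [pred d | p d != 0]| < #|'I_n|.
  rewrite card_in_imset //; apply/proper_card/properP; split; first exact/subsetP.
  by exists c; rewrite ?inE ?pc0.
have [k k_out] : exists k, k \notin s @: [pred d | p d != 0].
  apply/existsP; apply: contraTT img_small => /existsPn all_in; rewrite -leqNgt.
  by apply/subset_leq_card/subsetP => k _; move: (all_in k); rewrite negbK.
exists k => d pd; by apply: contraNneq k_out => <-; apply: imset_f.
Qed.

Lemma single_val_labelled_sum (I : finType) m (F : {pred I}) (t lab : I -> nat) :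
  {in F &, injective lab} ->
  (forall i, i \in F -> lab i <= m /\ single_val (lab i).+1 A (t i)) ->
  A (\sum_(i in F) t i) -> 0 < \sum_(i in F) t i -> single_val m.+1 A (\sum_(i in F) t i).
Proof.
move=> lab_inj lab_F Asum sum_gt0.
(* Lay the tiles out at their labels: the position is reachable, and so is their merge. *)
pose u (k : 'I_m.+1) := \sum_(i in F | lab i == k) t i.
have u_single k : u k != 0 -> single_val k.+1 A (u k).
  rewrite /u; case: (pickP [pred i in F | lab i == k]) => [i /andP [iF /eqP lik] _|none].
    rewrite (big_pred1 i) => [|j]; first by rewrite -lik; exact: (lab_F i iF).2.
    apply/andP/eqP => [[jF /eqP ljk]|->]; last by rewrite iF lik.
    by apply: lab_inj; rewrite // ljk lik.
  by rewrite big_pred0 ?eqxx // => i; exact: none.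
have ru : reachable A u.
  by apply/single_bounded_reachable/(labelling_single_bounded (s := id)); split.
apply: single_val_le_sum ru Asum sum_gt0 (eq_leq _).
rewrite (partition_big (fun i => inord (lab i) : 'I_m.+1) predT) //=.
apply: eq_bigr => k _; apply: eq_bigl => i; case iF: (i \in F) => //=.
by rewrite -(inj_eq val_inj) /= inordK // ltnS; case: (lab_F i iF).
Qed.

Lemma labelling_place n (p : 'I_n -> nat) s c : A 1 -> p c = 0 -> labelling p s ->
  exists s1, labelling (upd p c 1) s1.
Proof.
move=> A1 pc0 [lab_single s_inj]; have [k k_fresh] := fresh_label pc0 s_inj.
exists (upd s c k); split.
  move=> d; rewrite /upd; case: (d =P c) => [_ _|_]; last exact: lab_single.
  exact: single_val1.
move=> d d'; rewrite !inE /upd; case: (d =P c) => [->|_]; case: (d' =P c) => [->|_] //.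
- by move=> _ pd' kd'; have := k_fresh d' pd'; rewrite kd' eqxx.
- by move=> pd _ dk; have := k_fresh d pd; rewrite dk eqxx.
- by apply: s_inj.
Qed.

Lemma labelling_merge n (p q : 'I_n -> nat) (g : 'I_n -> 'I_n) s :
  labelling p s -> (forall i, 0 < p i -> 0 < p (g i)) ->
  (forall j, q j = if g j == j then \sum_(i | g i == j) p i else 0) ->
  (forall j, q j != 0 -> A (q j)) -> exists s', labelling q s'.
Proof.
move=> [lab_single s_inj] gpos qE Aq.
pose F j := [pred i | (g i == j) && (p i != 0)].
pose r j := [arg max_(i > j | F j i) s i].
have r_spec j : q j != 0 ->
    [/\ g (r j) = j, p (r j) != 0 & forall i, F j i -> s i <= s (r j)].
  move=> qj; have Fjj : F j j.
    move: qj; rewrite qE /=; case: (g j =P j) => //= gj; apply: contraNneq => pj0.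
    rewrite big1 // => i /eqP gi; case: (posnP (p i)) => // /gpos.
    by rewrite gi pj0.
  by rewrite /r; case: arg_maxnP => // i /andP [/eqP gi pi] max_i.
have q_sum j : q j != 0 -> q j = \sum_(i in F j) p i.
  rewrite qE; case: (g j =P j) => [_ _|]; last by rewrite eqxx.
  rewrite (bigID (fun i => p i != 0)) /= [X in _ + X]big1 ?addn0 //.
  by move=> i /andP [_ /negPn /eqP].
exists (fun j => s (r j)); split.
  move=> j qj; have [gr pr max_r] := r_spec j qj; rewrite q_sum //.
  apply: (single_val_labelled_sum (lab := fun i => nat_of_ord (s i))).
  - by move=> x y /andP [_ px] /andP [_ py] /ord_inj; apply: s_inj.
  - by move=> i iF; split; [exact: max_r | case/andP: iF => _ /lab_single].
  - by rewrite -q_sum //; apply: Aq.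
  - by rewrite -q_sum // lt0n.
move=> j j'; rewrite !inE => qj qj' eq_r.
have [gr pr _] := r_spec j qj; have [gr' pr' _] := r_spec j' qj'.
by rewrite -gr -gr' (s_inj _ _ _ _ eq_r).
Qed.

Lemma reachable_labelling n (p : 'I_n -> nat) :
  A 1 -> reachable A p -> exists s, labelling p s.
Proof.
move=> A1; elim=> [p0 p00|p0 q rp0 [s ls] st].
  by exists id; split=> [d|d d']; rewrite ?inE p00 eqxx.
have Aq := reachable_valueA A1 (reach_step rp0 st).
case: st => c [pc0 [g [_ [_ [gpos [_ qE]]]]]].
have [s1 ls1] := labelling_place A1 pc0 ls.
exact: labelling_merge ls1 gpos qE Aq.
Qed.

Lemma reachable_iff_single_bounded n (p : 'I_n -> nat) :
  A 1 -> reachable A p <-> single_bounded p.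
Proof.
move=> A1; split; last exact: single_bounded_reachable.
by case/(reachable_labelling A1) => s /labelling_single_bounded.
Qed.

Lemma sorted_nth_lt (s : seq nat) v i : sorted leq s -> i < size s ->
  (nth 0 s i < v) = (i < count (fun x => x < v) s).
Proof.
elim: s i => [|x s IH] i //= srt lt_i.
have s_ge_x : all (leq x) s := order_path_min leq_trans srt.
case: (ltnP x v) => [lt_xv|le_vx].
  case: i lt_i => [|i] //= lt_i; rewrite add1n ltnS; exact: IH (path_sorted srt) lt_i.
have -> : count (fun y => y < v) s = 0.
  apply/eqP; rewrite -leqn0 leqNgt -has_count; apply/hasPn => y /(allP s_ge_x) xy.
  by rewrite -leqNgt (leq_trans le_vx).
rewrite ltn0; apply/negbTE; rewrite -leqNgt.
case: i lt_i => [_|i lt_i] /=; first exact: le_vx.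
by apply: leq_trans le_vx _; apply: (allP s_ge_x); rewrite mem_nth.
Qed.

Lemma size_sorted_values n (p : 'I_n -> nat) : size (sorted_values p) = n.
Proof. by rewrite size_sort size_map size_enum_ord. Qed.

Lemma count_sorted_values n (p : 'I_n -> nat) v :
  count (fun x => x < v) (sorted_values p) = #|[pred e | p e < v]|.
Proof.
rewrite count_sort count_map cardE -size_filter /enum_mem -filter_predI.
by congr size; apply: eq_filter => x; rewrite /= andbT.
Qed.

Lemma single_val_le_Single n x : single_val n A x -> le_Single x n A.
Proof. by move=> sx b; apply. Qed.

Lemma le_Single_trans n x y : le_Single y n A -> x <= y -> le_Single x n A.
Proof. by move=> le_y le_xy b /le_y; apply: leq_trans. Qed.

Lemma le_Single_single_val n x : le_Single x n A -> A x -> 0 < x -> single_val n A x.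
Proof.
move=> le_x Ax x_gt0.
have [[y sy le_xy]|no_y] := classic (exists2 y, single_val n A y & x <= y).
  exact: single_val_downward sy Ax x_gt0 le_xy.
suff : x <= x.-1 by rewrite leqNgt ltn_predL x_gt0.
apply: le_x => y sy; rewrite -ltnS prednK // ltnNge; apply/negP => le_xy.
by apply: no_y; exists y.
Qed.

Lemma single_bounded_sorted n (p : 'I_n -> nat) : (forall d, p d != 0 -> A (p d)) ->
  single_bounded p <-> forall i, i < n -> le_Single (nth 0 (sorted_values p) i) i.+1 A.
Proof.
move=> Ap; have srt : sorted leq (sorted_values p) := sort_sorted leq_total _.
split=> [bp i lt_in|bnd d pd].
  set v := nth 0 _ i; have [-> b //|v0] := eqVneq v 0.
  have /mapP [d _ vd] : v \in [seq p i | i <- enum 'I_n].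
    by rewrite -(mem_sort leq) mem_nth // size_sorted_values.
  rewrite vd in v0 *; apply/single_val_le_Single/(single_val_widen (bp d v0)).
  rewrite ltnS -count_sorted_values leqNgt -vd -sorted_nth_lt ?size_sorted_values //.
  by rewrite ltnn.
set v := p d; set l := #|_|.
have lt_ln : l < n.
  rewrite -[X in _ < X]card_ord; apply/proper_card/properP; split; first exact/subsetP.
  by exists d; rewrite ?inE ?ltnn.
have le_v : v <= nth 0 (sorted_values p) l.
  by rewrite leqNgt sorted_nth_lt ?size_sorted_values // count_sorted_values ltnn.
apply: le_Single_single_val (Ap d pd) _; last by rewrite lt0n.
exact: le_Single_trans (bnd l lt_ln) le_v.
Qed.

End Game.

Theorem mainTheorem6 (n : nat) (A : nat -> Prop)
  (hA : forall a, A a -> 0 < a) (h1 : A 1) (hn : 1 <= n)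
  (P : 'I_n -> nat) (hP : forall i, P i != 0 -> A (P i)) :
  reachable A P <->
  (forall i, i < n -> le_Single (nth 0 (sorted_values P) i) i.+1 A).
Proof.
apply: iff_trans (reachable_iff_single_bounded _ h1) _.
exact: single_bounded_sorted.
Qed.
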